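(* Every regainingly approximable number is speedable.
   Context: A real $x$ is regainingly approximable if there is a computable non-decreasing sequence of rationals $(x_n)_n$ converging to $x$ with $x - x_n < 2^{-n}$ for infinitely many $n\in\mathbb{N}$. A left-computable real $x$ (i.e. limit of a computable non-decreasing sequence of rationals) is speedable if there exist $\rho\in(0,1)$ and a computable strictly increasing sequence of rationals $(x_n)_n$ converging to $x$ such that $\frac{x-x_{n+1}}{x-x_n}\le\rho$ for infinitely many $n\in\mathbb{N}$. *)

From HB Require Import structures.
From mathcomp Require Import all_boot all_order all_algebra.
From mathcomp Require Import all_classical all_reals all_analysis.
From Stdlib Require Import List.

Set Implicit Arguments.
Unset Strict Implicit.
Unset Printing Implicit Defensive.

Import Order.TTheory GRing.Theory Num.Theory.
Import numFieldNormedType.Exports.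
Local Open Scope classical_set_scope.
Local Open Scope ring_scope.

Inductive recf : Type :=
| RZero : recf
| RSucc : recf
| RProj : nat -> recf
| RComp : recf -> list recf -> recf
| RPrimRec : recf -> recf -> recf
| RMu : recf -> recf.

Inductive reval : recf -> list nat -> nat -> Prop :=
| ev_zero v : reval RZero v 0
| ev_succ v : reval RSucc v (S (List.hd 0%N v))
| ev_proj i v : reval (RProj i) v (List.nth i v 0%N)
| ev_comp f gs v ys y :
    revals gs v ys -> reval f ys y -> reval (RComp f gs) v y
| ev_pr0 f g v y : reval f v y -> reval (RPrimRec f g) (0%N :: v) y
| ev_prS f g n v r y :
    reval (RPrimRec f g) (n :: v) r -> reval g (n :: r :: v) y ->
    reval (RPrimRec f g) (S n :: v) y
| ev_mu f v n :
    reval f (n :: v) 0 ->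
    (forall m, (m < n)%N -> exists k, reval f (m :: v) (S k)) ->
    reval (RMu f) v n
with revals : list recf -> list nat -> list nat -> Prop :=
| evs_nil v : revals nil v nil
| evs_cons g gs v y ys : reval g v y -> revals gs v ys -> revals (g :: gs) v (y :: ys).

Definition computable_nat (f : nat -> nat) : Prop :=
  exists c : recf, forall n, reval c (n :: nil) (f n).

Definition computable_rat_seq (q : nat -> rat) : Prop :=
  exists a b c : nat -> nat,
    [/\ computable_nat a, computable_nat b, computable_nat c &
        forall n, q n = ((a n)%:R - (b n)%:R) / ((c n).+1)%:R].

Definition nondecr_ratseq (q : nat -> rat) : Prop := forall n, q n <= q n.+1.
Definition incr_ratseq (q : nat -> rat) : Prop := forall n, q n < q n.+1.

Definition converges_to {R : realType} (q : nat -> rat) (x : R) : Prop :=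
  (fun n => ratr (q n) : R) @ \oo --> x.

Definition infinitely_often (P : nat -> Prop) : Prop :=
  forall N, exists n, (N <= n)%N /\ P n.

Definition left_computable {R : realType} (x : R) : Prop :=
  exists q : nat -> rat,
    [/\ computable_rat_seq q, nondecr_ratseq q & converges_to q x].

Definition regainingly_approximable {R : realType} (x : R) : Prop :=
  exists q : nat -> rat,
    [/\ computable_rat_seq q, nondecr_ratseq q, converges_to q x &
        infinitely_often (fun n => x - ratr (q n) < (2 : R) ^- n)].

Definition speedable {R : realType} (x : R) : Prop :=
  left_computable x /\
  exists rho : R, (0 < rho < 1) /\
  exists q : nat -> rat,
    [/\ computable_rat_seq q, incr_ratseq q, converges_to q x &
        infinitely_often
          (fun n => (x - ratr (q n.+1)) / (x - ratr (q n)) <= rho)].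

From mathcomp Require Import all_boot all_order all_algebra.
From mathcomp Require Import all_classical all_reals all_analysis.
From mathcomp Require Import ring lra zify.
Import Order.TTheory GRing.Theory Num.Theory.
Import numFieldNormedType.Exports.

(* Let (q n) be a computable nondecreasing sequence of rationals converging
   to x with x - q n < 2^-n for infinitely many n.  Subtract the correction
   term c n = (n+2)/2^n and put y n = q n - c n.  Then:
   - y is strictly increasing, since c is strictly decreasing;
   - y still converges to x, since c n -> 0;
   - whenever x - q (n+1) < 2^-(n+1) with n >= 2, the error x - y (n+1) is
     below (n+4)/2^(n+1) while x - y n >= c n = (2n+4)/2^(n+1), so the ratio
     of consecutive errors is at most 3/4.
   The file first shows that computable functions on nat (mu-recursive
   programs) are closed under +, *, predecessor and 2^n, deduces that
   computable rational sequences are closed under subtraction and contain c,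
   then proves the three analytic facts above, and finally combines them. *)

Definition prog_add := RPrimRec (RProj 0) (RComp RSucc [:: RProj 1]).

Lemma prog_add_spec n m v : reval prog_add (n :: m :: v) (n + m).
Proof.
elim: n => [|n IH]; first by apply: ev_pr0; exact: (ev_proj 0 (m :: v)).
rewrite addSn; apply: (ev_prS IH).
apply: (ev_comp (ys := [:: n + m])); last exact: (ev_succ [:: n + m]).
apply: evs_cons; last exact: evs_nil.
exact: (ev_proj 1 (n :: n + m :: m :: v)).
Qed.

Definition prog_mul := RPrimRec RZero (RComp prog_add [:: RProj 1; RProj 2]).

Lemma prog_mul_spec n m v : reval prog_mul (n :: m :: v) (n * m).
Proof.
elim: n => [|n IH]; first by apply: ev_pr0; exact: ev_zero.
rewrite mulSn addnC; apply: (ev_prS IH).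
apply: (ev_comp (ys := [:: n * m; m])); last exact: prog_add_spec.
apply: evs_cons; first exact: (ev_proj 1 (n :: n * m :: m :: v)).
apply: evs_cons; last exact: evs_nil.
exact: (ev_proj 2 (n :: n * m :: m :: v)).
Qed.

Definition prog_pow2 :=
  RPrimRec (RComp RSucc [:: RZero]) (RComp prog_add [:: RProj 1; RProj 1]).

Lemma prog_pow2_spec n v : reval prog_pow2 (n :: v) (2 ^ n).
Proof.
elim: n => [|n IH].
  apply: ev_pr0; apply: (ev_comp (ys := [:: 0%N])); last exact: (ev_succ [:: 0%N]).
  by apply: evs_cons; [exact: ev_zero | exact: evs_nil].
rewrite expnS mul2n -addnn; apply: (ev_prS IH).
apply: (ev_comp (ys := [:: 2 ^ n; 2 ^ n])); last exact: prog_add_spec.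
apply: evs_cons; first exact: (ev_proj 1 (n :: 2 ^ n :: v)).
apply: evs_cons; last exact: evs_nil.
exact: (ev_proj 1 (n :: 2 ^ n :: v)).
Qed.

Definition prog_pred := RPrimRec RZero (RProj 0).

Lemma prog_pred_spec n v : reval prog_pred (n :: v) n.-1.
Proof.
elim: n => [|n IH]; first by apply: ev_pr0; exact: ev_zero.
by apply: (ev_prS IH); exact: (ev_proj 0 (n :: n.-1 :: v)).
Qed.

Lemma computable_comp2 (p : recf) (h : nat -> nat -> nat) (f g : nat -> nat) :
  (forall n m, reval p [:: n; m] (h n m)) ->
  computable_nat f -> computable_nat g -> computable_nat (fun n => h (f n) (g n)).
Proof.
move=> hp [cf Hf] [cg Hg]; exists (RComp p [:: cf; cg]) => n.
apply: (ev_comp (ys := [:: f n; g n])); last exact: hp.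
apply: evs_cons; first exact: Hf.
by apply: evs_cons; [exact: Hg | exact: evs_nil].
Qed.

Lemma computable_comp (h f : nat -> nat) :
  computable_nat h -> computable_nat f -> computable_nat (fun n => h (f n)).
Proof.
move=> [ch Hh] [cf Hf]; exists (RComp ch [:: cf]) => n.
apply: (ev_comp (ys := [:: f n])); last exact: Hh.
by apply: evs_cons; [exact: Hf | exact: evs_nil].
Qed.

Lemma computable_add (f g : nat -> nat) :
  computable_nat f -> computable_nat g -> computable_nat (fun n => f n + g n)%N.
Proof. by apply: (@computable_comp2 prog_add) => n m; exact: prog_add_spec. Qed.

Lemma computable_mul (f g : nat -> nat) :
  computable_nat f -> computable_nat g -> computable_nat (fun n => f n * g n)%N.
Proof. by apply: (@computable_comp2 prog_mul) => n m; exact: prog_mul_spec. Qed.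

Lemma computable_pred : computable_nat predn.
Proof. by exists prog_pred => n; exact: prog_pred_spec. Qed.

Lemma computable_succ : computable_nat succn.
Proof. by exists RSucc => n; exact: (ev_succ [:: n]). Qed.

Lemma computable_zero : computable_nat (fun => 0%N).
Proof. by exists RZero => n; exact: ev_zero. Qed.

Lemma computable_pow2 : computable_nat (fun n => 2 ^ n)%N.
Proof. by exists prog_pow2 => n; exact: prog_pow2_spec. Qed.

Local Open Scope classical_set_scope.
Local Open Scope ring_scope.

Lemma computable_rat_seq_sub (q r : nat -> rat) :
  computable_rat_seq q -> computable_rat_seq r ->
  computable_rat_seq (fun n => q n - r n).
Proof.
move=> [a [b [c [ca cb cc Hq]]]] [a' [b' [c' [ca' cb' cc' Hr]]]].
have cS f : computable_nat f -> computable_nat (fun n => (f n).+1).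
  exact: computable_comp computable_succ.
exists (fun n => a n * (c' n).+1 + b' n * (c n).+1)%N.
exists (fun n => b n * (c' n).+1 + a' n * (c n).+1)%N.
exists (fun n => ((c n).+1 * (c' n).+1).-1)%N; split.
- by apply: computable_add; apply: computable_mul; auto.
- by apply: computable_add; apply: computable_mul; auto.
- by apply: computable_comp computable_pred _; apply: computable_mul; auto.
move=> n; rewrite Hq Hr prednK ?muln_gt0 //.
rewrite !natrD !natrM.
have hc : (c n).+1%:R != 0 :> rat by rewrite pnatr_eq0.
have hc' : (c' n).+1%:R != 0 :> rat by rewrite pnatr_eq0.
by field; apply/andP; split.
Qed.

Definition correction (F : fieldType) (n : nat) : F := n.+2%:R / 2 ^+ n.

Lemma computable_correction : computable_rat_seq (@correction rat).
Proof.
exists (fun n => n.+2)%N, (fun => 0%N), (fun n => (2 ^ n).-1)%N; split.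
- by apply: computable_comp computable_succ _; exact: computable_succ.
- exact: computable_zero.
- exact: computable_comp computable_pred computable_pow2.
by move=> n; rewrite prednK ?expn_gt0 // subr0 natrX.
Qed.

Lemma ratr_corrected (R : realType) (r : rat) (n : nat) :
  ratr (r - correction rat n) = ratr r - correction R n :> R.
Proof.
rewrite rmorphB /correction fmorph_div rmorphXn rmorph_nat.
by congr (_ - _ / _ ^+ _); exact: (ratr_nat R 2).
Qed.

(* c n - c (n+1) = (n+1)/2^(n+1) > 0. *)
Lemma correction_decreasing (F : realFieldType) (n : nat) :
  correction F n.+1 < correction F n.
Proof.
have u0 : 0 < ((2 : F) ^+ n)^-1 by rewrite invr_gt0 exprn_gt0.
rewrite /correction exprS invfM -[n.+3]addn3 -[n.+2]addn2 !natrD.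
have n0 : 0 <= n%:R :> F by [].
move: (((2 : F) ^+ n)^-1) u0 => u u0; nra.
Qed.

(* (n+2)(n+1) <= 4 * 2^n, i.e. c n <= 4 / (n+1). *)
Lemma correction_num_bound (n : nat) : (n.+2 * n.+1 <= 4 * 2 ^ n)%N.
Proof. by elim: n => [//|[//|n] IH]; rewrite expnS; nia. Qed.

Lemma correction_cvg0 (R : realType) : correction R @ \oo --> 0.
Proof.
apply: (@squeeze_cvgr _ _ _ _ (fun => 0) (fun n => 4 * harmonic n)).
- apply: nearW => n; apply/andP; split.
    by rewrite divr_ge0 ?exprn_ge0.
  rewrite /correction /harmonic /= ler_pdivrMr ?exprn_gt0 //.
  rewrite -natrX -[4 : R]/(4%:R) mulrAC ler_pdivlMr ?ltr0n //.
  rewrite -!natrM ler_nat.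
  by have := correction_num_bound n; lia.
- exact: cvg_cst.
- by rewrite -(mulr0 (4 : R)); apply: cvgM; [exact: cvg_cst | exact: cvg_harmonic].
Qed.

Lemma nondecr_le_limit (R : realType) (q : nat -> rat) (x : R) (n : nat) :
  nondecr_ratseq q -> converges_to q x -> ratr (q n) <= x.
Proof.
move=> nd cv.
have nd' : nondecreasing_seq (fun n => ratr (q n) : R).
  by apply/nondecreasing_seqP => m; rewrite ler_rat; exact: nd.
have cq : cvgn (fun n => ratr (q n) : R) by apply/cvg_ex; exists x.
by have := nondecreasing_cvgn_le nd' cq n; rewrite (cvg_lim (@Rhausdorff R) cv).
Qed.

Lemma corrected_error_ratio (F : realFieldType) (x a b : F) (n : nat) :
  (2 <= n)%N -> a <= x -> x - b < (2 : F) ^- n.+1 ->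
  (x - (b - correction F n.+1)) / (x - (a - correction F n)) <= 3 / 4.
Proof.
move=> n2 ax hb.
have u0 : 0 < ((2 : F) ^+ n)^-1 by rewrite invr_gt0 exprn_gt0.
have k2 : (2 : F) <= n%:R by rewrite (ler_nat F 2).
move: hb; rewrite /correction exprS invfM -[n.+3]addn3 -[n.+2]addn2 !natrD.
move: (((2 : F) ^+ n)^-1) u0 => u u0 hb.
rewrite ler_pdivrMr; nra.
Qed.

Section Speedup.
Variables (R : realType) (x : R) (q : nat -> rat).
Hypotheses (q_nondecr : nondecr_ratseq q) (q_cvg : converges_to q x).

Let y (n : nat) : rat := q n - correction rat n.

Lemma corrected_incr : incr_ratseq y.
Proof.
move=> n; rewrite /y; have := correction_decreasing rat n; have := q_nondecr n.
lra.
Qed.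

Lemma corrected_cvg : converges_to y x.
Proof.
rewrite /converges_to.
have -> : (fun n => ratr (y n) : R) = (fun n => ratr (q n) - correction R n).
  by apply: funext => n; exact: ratr_corrected.
by rewrite -[x]subr0; apply: cvgB; [exact: q_cvg | exact: correction_cvg0].
Qed.

(* Each regaining index m = n + 1 with n >= 2 yields a ratio <= 3/4 at n. *)
Lemma corrected_ratio_often :
  infinitely_often (fun n => x - ratr (q n) < (2 : R) ^- n) ->
  infinitely_often (fun n => (x - ratr (y n.+1)) / (x - ratr (y n)) <= 3 / 4).
Proof.
move=> regain N; have [[|n] [Nn close]] := regain N.+3; first by [].
exists n; split; first by lia.
rewrite /y !ratr_corrected.
by apply: corrected_error_ratio => //; [lia | exact: nondecr_le_limit].
Qed.

End Speedup.

Theorem proposition5p2 (R : realType) (x : R) :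
  regainingly_approximable x -> speedable x.
Proof.
move=> [q [q_comp q_nondecr q_cvg regain]].
split; first by exists q.
exists (3 / 4); split; first by apply/andP; split; lra.
exists (fun n => q n - correction rat n); split.
- exact: computable_rat_seq_sub q_comp computable_correction.
- exact: corrected_incr.
- exact: corrected_cvg.
- exact: corrected_ratio_often.
Qed.
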